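(* Let $m\in\mathbb{N}$ and let $X=\{a_1,\dots,a_n\}\subset\mathbb{R}^m$ be a finite point cloud with at least two points, equipped with the Euclidean metric $d_X$. Let $Y=\rho_{\mathrm{UTD}}(X)\subset\mathcal{S}(\mathbb{C}^{m+1})$, let $d_Y$ be the Hilbert--Schmidt metric restricted to $Y$, and let $\lambda=r(X)\sqrt{m(m+1)}$. Then the (Vietoris--Rips) persistent homology of $(X,d_X)$ equals the persistent homology of $(Y,\lambda\,d_Y)$, i.e., for every $k\ge0$ the degree-$k$ persistence vector spaces are isomorphic (equivalently, they have the same persistence diagrams).
   Context: Notation: $\bar a=\frac1n\sum_i a_i$, $\mathrm{diam}(X)=\max_{i,j}\lVert a_i-a_j\rVert$, $r(X)=\mathrm{diam}(X)/2$. $R_m$ is the $(m+1)\times(m+1)$ orthogonal matrix with, for $i,j\le m$, $(R_m)_{ii}=\frac{1+(m-1)\sqrt{m+1}}{m\sqrt{m+1}}$, $(R_m)_{ij}=\frac{1-\sqrt{m+1}}{m\sqrt{m+1}}$ ($i\neq j$), $(R_m)_{m+1,j}=-\frac{1}{\sqrt{m+1}}$ ($j\le m$), $(R_m)_{i,m+1}=\frac1{\sqrt{m+1}}$ (all $i$). The uniform transformation is $\mathcal{T}_X(x)=\frac{1}{r(X)\sqrt{m(m+1)}}R_m\begin{bmatrix}x-\bar a\\0\end{bmatrix}+\frac{1}{m+1}\mathbf{1}_{m+1}$, and $\rho_{\mathrm{UTD}}(x)=\sum_{j=1}^{m+1}\mathcal{T}_X(x)_j|j\rangle\langle j|$ (diagonal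 density matrix). Hilbert--Schmidt metric: $d_{\mathrm{HS}}(\rho,\sigma)=\sqrt{\mathrm{Tr}[(\rho-\sigma)^\dagger(\rho-\sigma)]}$. For a finite metric space $(Z,d_Z)$ and $\epsilon\ge0$, the Vietoris--Rips complex $\mathcal{R}^\epsilon(Z,d_Z)$ is the abstract simplicial complex whose simplices are nonempty subsets $\sigma\subseteq Z$ with $\mathrm{diam}(\sigma)<\epsilon$ (all singletons included); for $\epsilon\le\epsilon'$ there are inclusions $\mathcal{R}^\epsilon\hookrightarrow\mathcal{R}^{\epsilon'}$. The degree-$k$ persistent homology of $(Z,d_Z)$ is the persistence vector space $\epsilon\mapsto H_k(\mathcal{R}^\epsilon(Z,d_Z);\mathbb{F})$ (simplicial homology over a fixed field $\mathbb{F}$) together with the linear maps induced by these inclusions. *)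

From HB Require Import structures.
From mathcomp Require Import all_boot all_order all_algebra.
From mathcomp Require Import finmap.
From mathcomp Require Import complex.
From mathcomp Require Import reals.
Set Implicit Arguments. Unset Strict Implicit. Unset Printing Implicit Defensive.
Import Order.TTheory GRing.Theory Num.Theory.
Local Open Scope ring_scope.
Local Open Scope fset_scope.

Section VR.
Variables (R : realType) (T : choiceType) (d : T -> T -> R) (Z : {fset T}).

Definition in_VR (eps : R) (s : {set Z}) : bool :=
  (s != set0) &&
  ((#|s| == 1)%N || [forall x in s, [forall y in s, d (val x) (val y) < eps]]).

Variable F : fieldType.

(* Vertices are
   ordered by enum_rank (a fixed total order), giving the orientation. *)
Definition chain := {set Z} -> F.

Definition face_pos (v : Z) (s : {set Z}) : nat :=
  #|[set u in s | (enum_rank u < enum_rank v)%N]|.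

(* simplicial boundary: d[v0..vk] = sum_i (-1)^i [v0..^vi..vk] *)
Definition bnd (c : chain) : chain := fun t =>
  \sum_(s : {set Z}) \sum_(v in s)
     (if (s :\ v == t) && (t != set0) then c s * (-1) ^+ face_pos v s else 0).

Definition supported (eps : R) (k : nat) (c : chain) : Prop :=
  forall s, c s != 0 -> #|s| = k.+1 /\ in_VR eps s.

Definition is_cycle (eps : R) (k : nat) (c : chain) : Prop :=
  supported eps k c /\ forall t, bnd c t = 0.

Definition is_boundary (eps : R) (k : nat) (c : chain) : Prop :=
  exists b, supported eps k.+1 b /\ forall t, c t = bnd b t.

End VR.

Definition chain_apply (F : fieldType) (Z1 Z2 : finType)
  (M : {set Z1} -> {set Z2} -> F) (c : {set Z1} -> F) : {set Z2} -> F :=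
  fun t => \sum_(s : {set Z1}) c s * M s t.

Definition chain_sub (F : fieldType) (Z : finType) (c c' : {set Z} -> F) :=
  fun t => c t - c' t.

(* The degree-k persistence vector spaces eps |-> H_k(R^eps(Z1,d1);F) and
   eps |-> H_k(R^eps(Z2,d2);F) (eps >= 0) are isomorphic: there is a family
   of linear maps phi eps on chains, inducing well-defined linear maps
   H_k^eps(Z1) -> H_k^eps(Z2) (cycles to cycles, boundaries to boundaries)
   which are bijective (surjective + injective on homology classes) and
   commute with the maps induced by the inclusions R^eps -> R^eps'.
   (Every linear map between the homology quotients lifts to such a
   chain-level linear map, so this is exactly isomorphism of
   persistence modules.) *)
Definition PH_isomorphic (R : realType) (F : fieldType) (k : nat)
  (T1 : choiceType) (d1 : T1 -> T1 -> R) (Z1 : {fset T1})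
  (T2 : choiceType) (d2 : T2 -> T2 -> R) (Z2 : {fset T2}) : Prop :=
  exists phi : R -> {set Z1} -> {set Z2} -> F,
    (forall eps, 0 <= eps ->
       (forall c, is_cycle d1 eps k c -> is_cycle d2 eps k (chain_apply (phi eps) c))
    /\ (forall c, is_boundary d1 eps k c ->
                  is_boundary d2 eps k (chain_apply (phi eps) c))
    /\ (forall z, is_cycle d2 eps k z -> exists c, is_cycle d1 eps k c /\
          is_boundary d2 eps k (chain_sub z (chain_apply (phi eps) c)))
    /\ (forall c, is_cycle d1 eps k c ->
          is_boundary d2 eps k (chain_apply (phi eps) c) -> is_boundary d1 eps k c))
 /\ (forall eps eps', 0 <= eps -> eps <= eps' ->
       forall c, is_cycle d1 eps k c ->
         is_boundary d2 eps' k
           (chain_sub (chain_apply (phi eps') c) (chain_apply (phi eps) c))).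

Section UTD.
Variables (R : realType) (m : nat).

Definition eucl_norm (v : 'cV[R]_m) : R := Num.sqrt (\sum_i v i 0 ^+ 2).
Definition eucl_dist (x y : 'cV[R]_m) : R := eucl_norm (x - y).

Definition centroid (X : {fset 'cV[R]_m}) : 'cV[R]_m :=
  (#|` X|%:R)^-1 *: \sum_(x <- X) x.

Definition diam (X : {fset 'cV[R]_m}) : R :=
  \big[Num.max/0]_(x <- X) \big[Num.max/0]_(y <- X) eucl_dist x y.

Definition radius (X : {fset 'cV[R]_m}) : R := diam X / 2.

(* the orthogonal matrix R_m (1-based indices i,j <= m are 0-based < m) *)
Definition Rmat : 'M[R]_(m + 1) := \matrix_(i, j)
  let s := Num.sqrt (m%:R + 1) in
  if ((i < m)%N && (j < m)%N) then
    (if i == j then (1 + (m%:R - 1) * s) / (m%:R * s)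
     else (1 - s) / (m%:R * s))
  else if (j < m)%N then - 1 / s
  else 1 / s.

Definition UT (X : {fset 'cV[R]_m}) (x : 'cV[R]_m) : 'cV[R]_(m + 1) :=
  (radius X * Num.sqrt (m%:R * (m%:R + 1)))^-1 *:
     (Rmat *m col_mx (x - centroid X) (0 : 'cV[R]_1))
  + (m%:R + 1)^-1 *: const_mx 1.

(* rho_UTD(x) = sum_j T_X(x)_j |j><j| as a complex matrix *)
Definition rhoUTD (X : {fset 'cV[R]_m}) (x : 'cV[R]_m) : 'M[R[i]]_(m + 1) :=
  diag_mx (\row_j ((UT X x j 0)%:C)%C).

Definition lambdaX (X : {fset 'cV[R]_m}) : R :=
  radius X * Num.sqrt (m%:R * (m%:R + 1)).

Definition rhoUTD_set (X : {fset 'cV[R]_m}) : {fset 'M[R[i]]_(m + 1)} :=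
  [fset rhoUTD X x | x in X].
End UTD.

(* Hilbert--Schmidt metric sqrt(Tr[(rho-sigma)^dagger (rho-sigma)]);
   the trace is real, Re takes it as an element of R. *)
Definition hs_dist (R : realType) (n : nat) (rho sigma : 'M[R[i]]_n) : R :=
  let D := rho - sigma in
  Num.sqrt (@complex.Re R (\tr ((map_mx Num.conj D)^T *m D))).

From HB Require Import structures.
From mathcomp Require Import all_boot all_order all_algebra.
From mathcomp Require Import finmap complex reals.
From mathcomp Require Import ring.
Set Implicit Arguments.
Unset Strict Implicit.
Unset Printing Implicit Defensive.
Import Order.TTheory GRing.Theory Num.Theory.
Local Open Scope ring_scope.

(* Scaled by lambda, rho_UTD is an isometry from (X, d_X) onto (Y, d_Y): the
   Hilbert--Schmidt distance of two diagonal matrices is the Euclidean distance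
   of their diagonals, T_X is affine with linear part R_m / lambda, and R_m is
   orthogonal on R^m x {0}.  Isometric finite metric spaces have the same
   Vietoris--Rips complexes up to relabelling the vertices, so the chain map
   s |-> +-f(s) is an isomorphism of filtered chain complexes; the sign, the
   parity of the inversions of f on s, reconciles the vertex orders that orient
   the simplices on both sides and makes the map commute with the boundary. *)

Lemma card_sep_sum (T : finType) (A : {set T}) (P : pred T) :
  #|[set u in A | P u]| = (\sum_(u in A) P u)%N.
Proof.
rewrite -sum1_card (eq_bigl (fun u => (u \in A) && P u)) => [|u]; last first.
  by rewrite inE.
by rewrite big_mkcondr /=; apply: eq_bigr => u _; case: (P u).
Qed.

Lemma imset_setD1 (aT rT : finType) (f : aT -> rT) (A : {set aT}) (a : aT) :
  injective f -> f @: (A :\ a) = f @: A :\ f a.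
Proof.
move=> f_inj; apply/setP => y; rewrite in_setD1.
apply/imsetP/andP => [[x /setD1P[xa xA] ->] | [ya /imsetP[x xA yx]]].
  by rewrite (inj_eq f_inj) imset_f.
exists x => //; rewrite in_setD1 xA andbT.
by apply: contraNneq ya => xa; rewrite yx xa.
Qed.

Section Inversions.
Variables (T : finType) (r1 r2 : T -> nat).
Hypotheses (r1_inj : injective r1) (r2_inj : injective r2).
Local Open Scope nat_scope.

Definition inverted (x y : T) : bool := (r1 x < r1 y) && (r2 y < r2 x).

Definition inversions (s : {set T}) : nat :=
  \sum_(x in s) \sum_(y in s) inverted x y.

Definition rank_below (r : T -> nat) (v : T) (s : {set T}) : nat :=
  #|[set u in s | r u < r v]|.

Lemma inversions_setD1 (s : {set T}) (v : T) : v \in s ->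
  inversions s =
  inversions (s :\ v) + \sum_(u in s :\ v) (inverted v u + inverted u v).
Proof.
move=> vs; rewrite /inversions (big_setD1 v) //= (big_setD1 v) //=.
rewrite /inverted ltnn add0n.
under [X in _ + X]eq_bigr => x _ do rewrite (big_setD1 v) //=.
by rewrite !big_split /= addnA addnC.
Qed.

Lemma rank_below_setD1 (r : T -> nat) (s : {set T}) (v : T) : v \in s ->
  rank_below r v s = \sum_(u in s :\ v) (r u < r v).
Proof.
by move=> vs; rewrite /rank_below card_sep_sum (big_setD1 v) //= ltnn.
Qed.

Lemma inversions_rank_below (s : {set T}) (v : T) : v \in s ->
  inversions s + rank_below r2 v s =
  inversions (s :\ v) + rank_below r1 v s
  + 2 * \sum_(u in s :\ v) inverted v u.
Proof.
move=> vs; rewrite (inversions_setD1 vs) !(rank_below_setD1 _ vs) -!addnA.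
congr (_ + _); rewrite big_distrr -!big_split /=.
apply: eq_bigr => u; rewrite in_setD1 => /andP[uv _].
have ne1 : r1 u != r1 v by rewrite (inj_eq r1_inj).
have ne2 : r2 u != r2 v by rewrite (inj_eq r2_inj).
rewrite /inverted; case: ltngtP ne1 => // _ _; case: ltngtP ne2 => //.
Qed.

End Inversions.

Lemma bnd_ext (T : choiceType) (Z : {fset T}) (F : fieldType)
    (c c' : chain Z F) :
  (forall s, c s = c' s) -> forall t, bnd c t = bnd c' t.
Proof.
by move=> e t; apply: eq_bigr => s _; apply: eq_bigr => v _; rewrite e.
Qed.

Lemma is_boundary0 (R : realType) (T : choiceType) (d : T -> T -> R)
    (Z : {fset T}) (F : fieldType) (eps : R) (k : nat) (c : chain Z F) :
  (forall t, c t = 0) -> is_boundary d eps k c.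
Proof.
move=> c0; exists (fun _ => 0); split => [s|t]; first by rewrite eqxx.
rewrite c0 /bnd big1 // => s _; rewrite big1 // => v _.
by case: ifP; rewrite ?mul0r.
Qed.

Lemma in_VR_imset (R : realType) (T1 T2 : choiceType) (d1 : T1 -> T1 -> R)
    (d2 : T2 -> T2 -> R) (Z1 : {fset T1}) (Z2 : {fset T2}) (h : Z1 -> Z2) :
  injective h ->
  (forall x y, d2 (val (h x)) (val (h y)) = d1 (val x) (val y)) ->
  forall (eps : R) (s : {set Z1}), in_VR d2 eps (h @: s) = in_VR d1 eps s.
Proof.
move=> h_inj hd eps s; rewrite /in_VR imset_eq0 card_imset //.
congr (_ && (_ || _)).
apply/forall_inP/forall_inP => [H x xs | H _ /imsetP[x xs ->]].
  apply/forall_inP => y ys; rewrite -hd.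
  exact: (forall_inP (H _ (imset_f h xs)) _ (imset_f h ys)).
apply/forall_inP => _ /imsetP[y ys ->]; rewrite hd.
exact: (forall_inP (H x xs)).
Qed.

Section Relabel.
Variables (T1 T2 : choiceType) (Z1 : {fset T1}) (Z2 : {fset T2}).
Variable F : fieldType.
Variables (f : Z1 -> Z2) (g : Z2 -> Z1).
Hypotheses (fK : cancel f g) (gK : cancel g f).

Let f_inj : injective f := can_inj fK.

Lemma imfK (s : {set Z1}) : g @: (f @: s) = s.
Proof. by rewrite -imset_comp (eq_imset _ fK) imset_id. Qed.

Lemma imgK (t : {set Z2}) : f @: (g @: t) = t.
Proof. by rewrite -imset_comp (eq_imset _ gK) imset_id. Qed.

Let rank1 (u : Z1) : nat := enum_rank u.
Let rank2 (u : Z1) : nat := enum_rank (f u).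

Let rank1_inj : injective rank1.
Proof. by move=> u v /val_inj/enum_rank_inj. Qed.

Let rank2_inj : injective rank2.
Proof. by move=> u v /val_inj/enum_rank_inj/f_inj. Qed.

(* The sign of the permutation of s comparing the vertex order of Z1 with the
   order pulled back from Z2 along f. *)
Definition orient_sign (s : {set Z1}) : F := (-1) ^+ inversions rank1 rank2 s.

Lemma face_pos_imset (s : {set Z1}) (v : Z1) :
  face_pos (f v) (f @: s) = rank_below rank2 v s.
Proof.
rewrite /face_pos /rank_below !card_sep_sum big_imset //=.
exact: in2W f_inj.
Qed.

Lemma orient_sign_setD1 (s : {set Z1}) (v : Z1) : v \in s ->
  orient_sign s * (-1) ^+ face_pos (f v) (f @: s) =
  orient_sign (s :\ v) * (-1) ^+ face_pos v s.
Proof.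
move=> vs; rewrite face_pos_imset /orient_sign -!exprD.
by rewrite inversions_rank_below // exprD exprM sqrrN !expr1n mulr1.
Qed.

Definition relabel_mx (s : {set Z1}) (t : {set Z2}) : F :=
  if f @: s == t then orient_sign s else 0.

Lemma relabelE (c : chain Z1 F) (t : {set Z2}) :
  chain_apply relabel_mx c t = orient_sign (g @: t) * c (g @: t).
Proof.
rewrite /chain_apply (bigD1 (g @: t)) //= big1 => [|s ne].
  by rewrite /relabel_mx imgK eqxx addr0 mulrC.
rewrite /relabel_mx; case: eqP => [e|]; last by rewrite mulr0.
by case/eqP: ne; rewrite -e imfK.
Qed.

Lemma bnd_relabel (c : chain Z1 F) (t : {set Z2}) :
  bnd (chain_apply relabel_mx c) t = chain_apply relabel_mx (bnd c) t.
Proof.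
rewrite relabelE /bnd big_distrr /=.
rewrite (reindex (fun s : {set Z1} => f @: s)) /=; last first.
  exact: onW_bij (Bijective imfK imgK).
apply: eq_bigr => s _; rewrite big_imset /=; last exact: in2W f_inj.
rewrite big_distrr /=; apply: eq_bigr => v vs.
have -> : (f @: s :\ f v == t) = (s :\ v == g @: t).
  by rewrite -imset_setD1 // -{1}(imgK t) (inj_eq (imset_inj f_inj)).
rewrite -[t == set0](imset_eq0 g); case: ifP => [/andP[/eqP <- _] | _].
  by rewrite relabelE imfK mulrCA -orient_sign_setD1 // mulrCA mulrA.
by rewrite mulr0.
Qed.

Definition unrelabel (z : chain Z2 F) : chain Z1 F :=
  fun s => orient_sign s * z (f @: s).

Lemma orient_sign_sqr (s : {set Z1}) : orient_sign s * orient_sign s = 1.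
Proof. by rewrite -expr2 sqrr_sign. Qed.

Lemma relabelK (z : chain Z2 F) (t : {set Z2}) :
  chain_apply relabel_mx (unrelabel z) t = z t.
Proof. by rewrite relabelE /unrelabel imgK mulrA orient_sign_sqr mul1r. Qed.

Lemma relabel_inj (c c' : chain Z1 F) :
  (forall t, chain_apply relabel_mx c t = chain_apply relabel_mx c' t) ->
  forall s, c s = c' s.
Proof.
move=> e s; have := e (f @: s); rewrite !relabelE imfK.
by apply: mulfI; rewrite signr_eq0.
Qed.

Variables (R : realType) (d1 : T1 -> T1 -> R) (d2 : T2 -> T2 -> R).
Hypothesis f_isometry :
  forall x y, d2 (val (f x)) (val (f y)) = d1 (val x) (val y).

Lemma supported_relabel (eps : R) (k : nat) (c : chain Z1 F) :
  supported d1 eps k c -> supported d2 eps k (chain_apply relabel_mx c).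
Proof.
have g_isometry x y : d1 (val (g x)) (val (g y)) = d2 (val x) (val y).
  by rewrite -f_isometry !gK.
move=> sc t; rewrite relabelE mulf_eq0 negb_or => /andP[_ /sc[card_t vr_t]].
have g_inj : injective g := can_inj gK.
by rewrite -(card_imset _ g_inj) -(in_VR_imset g_inj g_isometry).
Qed.

Lemma supported_unrelabel (eps : R) (k : nat) (z : chain Z2 F) :
  supported d2 eps k z -> supported d1 eps k (unrelabel z).
Proof.
move=> sz s; rewrite mulf_eq0 negb_or => /andP[_ /sz[card_s vr_s]].
by rewrite -(card_imset _ f_inj) -(in_VR_imset f_inj f_isometry).
Qed.

Theorem PH_isomorphic_isometry (k : nat) : PH_isomorphic F k d1 Z1 d2 Z2.
Proof.
exists (fun _ => relabel_mx); split => [eps _ | eps eps' _ _ c _]; last first.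
  by apply: is_boundary0 => t; rewrite /chain_sub subrr.
split; [|split; [|split]].
- move=> c [sc bc]; split; first exact: supported_relabel.
  by move=> t; rewrite bnd_relabel relabelE bc mulr0.
- move=> c [b [sb hb]]; exists (chain_apply relabel_mx b).
  split; first exact: supported_relabel.
  by move=> t; rewrite bnd_relabel !relabelE hb.
- move=> z [sz bz]; exists (unrelabel z); split.
    split; first exact: supported_unrelabel.
    apply: (@relabel_inj _ (fun _ => 0)) => t.
    by rewrite -bnd_relabel (bnd_ext (relabelK z)) bz relabelE mulr0.
  by apply: is_boundary0 => t; rewrite /chain_sub relabelK subrr.
- move=> c _ [b [sb hb]]; exists (unrelabel b).
  split; first exact: supported_unrelabel.
  apply: relabel_inj => t; rewrite hb -bnd_relabel.
  by apply: bnd_ext => u; rewrite relabelK.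
Qed.

End Relabel.

Section PointCloud.
Variables (R : realType) (m : nat).

Lemma eucl_dist_xx (x : 'cV[R]_m) : eucl_dist x x = 0.
Proof.
rewrite /eucl_dist /eucl_norm subrr big1 ?sqrtr0 // => i _.
by rewrite mxE expr0n.
Qed.

Lemma eucl_dist_eq0 (x y : 'cV[R]_m) : eucl_dist x y = 0 -> x = y.
Proof.
rewrite /eucl_dist /eucl_norm => /eqP; rewrite sqrtr_eq0 => sum_le0.
have sum0 : \sum_i (x - y) i 0 ^+ 2 = 0.
  by apply/le_anti; rewrite sum_le0 sumr_ge0 // => i _; rewrite sqr_ge0.
apply/matrixP => i j; rewrite (ord1 j); apply/eqP; rewrite -subr_eq0 -sqrf_eq0.
have := psumr_eq0P (fun i _ => sqr_ge0 ((x - y) i 0)) sum0 (i := i) isT.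
by rewrite !mxE => ->.
Qed.

Lemma eucl_dist_le_diam (X : {fset 'cV[R]_m}) (x y : 'cV[R]_m) :
  x \in X -> y \in X -> eucl_dist x y <= diam X.
Proof.
move=> xX yX; apply: le_trans (le_bigmax_seq 0 x xpredT _ xX isT).
exact: (le_bigmax_seq 0 y xpredT _ yX isT).
Qed.

Lemma lambdaX_gt0 (X : {fset 'cV[R]_m}) : (2 <= #|` X|)%N -> 0 < lambdaX X.
Proof.
rewrite cardfE => /card_gt1P[x [y [_ _ xy]]].
have {}xy : val x != val y by rewrite (inj_eq val_inj).
have m_gt0 : (0 < m)%N.
  rewrite lt0n; apply: contra xy => /eqP m0; apply/eqP/matrixP => i.
  by have := ltn_ord i; rewrite {2}m0.
have dist_gt0 : 0 < eucl_dist (val x) (val y).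
  by rewrite lt_def sqrtr_ge0 andbT; apply: contra xy => /eqP/eucl_dist_eq0->.
have diam_gt0 : 0 < diam X.
  exact: lt_le_trans dist_gt0 (eucl_dist_le_diam (fsvalP x) (fsvalP y)).
rewrite /lambdaX /radius mulr_gt0 ?divr_gt0 // sqrtr_gt0 mulr_gt0 ?ltr0n //.
by rewrite ltr_wpDl ?ler0n.
Qed.

End PointCloud.

Lemma hs_dist_diag (R : realType) (n : nat) (u v : 'cV[R]_n) :
  hs_dist (diag_mx (\row_j (u j 0)%:C%C)) (diag_mx (\row_j (v j 0)%:C%C)) =
  Num.sqrt (\sum_i (u i 0 - v i 0) ^+ 2).
Proof.
rewrite /hs_dist /mxtrace; congr Num.sqrt.
rewrite -[RHS]/(complex.Re ((\sum_i (u i 0 - v i 0) ^+ 2)%:C)%C).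
congr complex.Re; rewrite rmorph_sum; apply: eq_bigr => i _.
rewrite mxE (bigD1 i) //= big1 ?addr0 => [|j ji]; last first.
  by rewrite !mxE (negbTE ji) !mulr0n subrr mulr0.
have conj_real (a : R) : ((a%:C)%C)^* = (a%:C)%C :> R[i] := conjc_real a.
by rewrite !mxE !eqxx !mulr1n -rmorphB conj_real -rmorphM expr2.
Qed.

Section UniformTransformation.
Variables (R : realType) (m : nat).

(* R_m has diagonal entries 1 + b and off-diagonal entries b in its first m
   rows, and -1/s in its last row. *)
Let s : R := Num.sqrt (m%:R + 1).
Let b : R := (1 - s) / (m%:R * s).

Let s_sqr : s ^+ 2 = m%:R + 1.
Proof. by rewrite sqr_sqrtr // addr_ge0 ?ler0n. Qed.

Let s_neq0 : s != 0.
Proof. by rewrite sqrtr_eq0 -ltNge ltr_wpDl ?ler0n. Qed.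

Lemma Rmat_col0 (v : 'cV[R]_m) :
  Rmat R m *m col_mx v 0 = lsubmx (Rmat R m) *m v.
Proof. by rewrite -{1}(hsubmxK (Rmat R m)) mul_row_col mulmx0 addr0. Qed.

Lemma Rmat_col_top (v : 'cV[R]_m) (i : 'I_m) : (0 < m)%N ->
  (Rmat R m *m col_mx v 0) (lshift 1 i) 0 = v i 0 + b * \sum_j v j 0.
Proof.
move=> m_gt0; have m_neq0 : m%:R != 0 :> R by rewrite pnatr_eq0 -lt0n.
have diag_eq : (1 + (m%:R - 1) * s) / (m%:R * s) = 1 + b.
  by rewrite /b; field; rewrite s_neq0 m_neq0.
rewrite Rmat_col0 mxE.
under eq_bigr => j _ do
  rewrite mxE /Rmat mxE /= !ltn_ord /= (inj_eq (@lshift_inj _ _)) -/s.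
rewrite (bigD1 i) //= eqxx diag_eq mulrDl mul1r -addrA; congr (_ + _).
rewrite [RHS]mulr_sumr [RHS](bigD1 i) //=; congr (_ + _).
by apply: eq_bigr => j ji; rewrite eq_sym (negbTE ji).
Qed.

Lemma Rmat_col_bottom (v : 'cV[R]_m) :
  (Rmat R m *m col_mx v 0) (rshift m ord0) 0 = - (1 / s) * \sum_j v j 0.
Proof.
rewrite Rmat_col0 mxE mulr_sumr; apply: eq_bigr => j _.
by rewrite mxE /Rmat mxE /= ltn_ord /= addn0 ltnn /= -/s mulNr.
Qed.

Lemma sum_sqr_shift (v : 'cV[R]_m) (c : R) :
  \sum_i (v i 0 + c) ^+ 2 =
  \sum_i v i 0 ^+ 2 + 2 * c * \sum_i v i 0 + m%:R * c ^+ 2.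
Proof.
under eq_bigr do rewrite sqrrD.
rewrite !big_split /= -mulr_suml sumr_const card_ord -(mulr_natl (c ^+ 2) m).
by set A := \sum_(i < m) _; set S := \sum_(i < m) _; clearbody A S; ring.
Qed.

Lemma Rmat_col_norm (v : 'cV[R]_m) :
  \sum_i ((Rmat R m *m col_mx v 0) i 0) ^+ 2 = \sum_i v i 0 ^+ 2.
Proof.
have [m0|m_gt0] := posnP m.
  have -> : v = 0 by apply/matrixP => i; have := ltn_ord i; rewrite {2}m0.
  by rewrite col_mx0 mulmx0 !big1 // => i _; rewrite mxE expr0n.
have m_neq0 : m%:R != 0 :> R by rewrite pnatr_eq0 -lt0n.
(* orthogonality of two of the first m columns of R_m *)
have b_eq : 2 * b + m%:R * b ^+ 2 + (1 / s) ^+ 2 = 0.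
  rewrite (_ : _ + _ = (1 + m%:R - s ^+ 2) / (m%:R * s ^+ 2)).
    by rewrite s_sqr [1 + _]addrC subrr mul0r.
  by rewrite /b; field; rewrite s_neq0 m_neq0.
rewrite big_split_ord /= big_ord1.
under eq_bigr do rewrite Rmat_col_top //.
rewrite Rmat_col_bottom sum_sqr_shift.
set A := \sum_i v i 0 ^+ 2; set S := \sum_i v i 0.
transitivity (A + S ^+ 2 * (2 * b + m%:R * b ^+ 2 + (1 / s) ^+ 2)); first ring.
by rewrite b_eq mulr0 addr0.
Qed.

Variable X : {fset 'cV[R]_m}.

Lemma UT_sub (x y : 'cV[R]_m) :
  UT X x - UT X y = (lambdaX X)^-1 *: (Rmat R m *m col_mx (x - y) 0).
Proof.
rewrite /UT /lambdaX opprD addrACA subrr addr0 -scalerBr -mulmxBr.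
by rewrite opp_col_mx add_col_mx oppr0 addr0 opprB addrA subrK.
Qed.

Lemma lambdaX_hs_dist (x y : 'cV[R]_m) : 0 < lambdaX X ->
  lambdaX X * hs_dist (rhoUTD X x) (rhoUTD X y) = eucl_dist x y.
Proof.
move=> lambda_gt0; rewrite hs_dist_diag.
have UT_sub_entry i : UT X x i 0 - UT X y i 0 =
    (lambdaX X)^-1 * (Rmat R m *m col_mx (x - y) 0) i 0.
  transitivity ((UT X x - UT X y) i 0); first by rewrite !mxE.
  by rewrite UT_sub [LHS]mxE.
under eq_bigr do rewrite UT_sub_entry exprMn.
rewrite -mulr_sumr Rmat_col_norm sqrtrM ?sqr_ge0 // sqrtr_sqr.
by rewrite ger0_norm ?invr_ge0 ?ltW // mulrA divff ?mul1r ?gt_eqF.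
Qed.

End UniformTransformation.

Local Open Scope fset_scope.

Lemma PH_isomorphic_imfset (R : realType) (F : fieldType) (k : nat)
    (T1 T2 : choiceType) (d1 : T1 -> T1 -> R) (d2 : T2 -> T2 -> R)
    (Z : {fset T1}) (h : T1 -> T2) :
  {in Z &, injective h} -> {in Z &, forall x y, d2 (h x) (h y) = d1 x y} ->
  PH_isomorphic F k d1 Z d2 [fset h x | x in Z].
Proof.
move=> h_inj h_isometry.
pose f (x : Z) : [fset h x | x in Z] := [` in_imfset _ h (fsvalP x)].
have f_inj : injective f.
  by move=> x y /(congr1 val) /h_inj e; apply/val_inj/e; apply: fsvalP.
have card_eq : #|{: [fset h x | x in Z]}| = #|{: Z}|.
  by rewrite -!cardfE; apply/eqP/card_in_imfsetP.
have [g fK gK] := inj_card_bij f_inj (eq_leq card_eq).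
apply: (PH_isomorphic_isometry _ fK gK) => x y.
exact: h_isometry (fsvalP x) (fsvalP y).
Qed.

Theorem mainTheorem3 (R : realType) (m : nat) (X : {fset 'cV[R]_m})
  (F : fieldType) (k : nat) :
  (2 <= #|` X|)%N ->
  PH_isomorphic F k (@eucl_dist R m) X
    (fun p q => lambdaX X * hs_dist p q) (rhoUTD_set X).
Proof.
move=> card_X; have lambda_gt0 := lambdaX_gt0 card_X.
have isometry x y :
    lambdaX X * hs_dist (rhoUTD X x) (rhoUTD X y) = eucl_dist x y.
  exact: lambdaX_hs_dist.
apply: PH_isomorphic_imfset => [x y _ _ rho_xy | x y _ _]; last exact: isometry.
by apply: eucl_dist_eq0; rewrite -isometry rho_xy isometry eucl_dist_xx.
Qed.
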